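(* $\mathrm{UF}_1^=$ and $\mathrm{FOC}^2$ are incomparable in expressivity: neither $\mathrm{UF}_1^=\leq\mathrm{FOC}^2$ nor $\mathrm{FOC}^2\leq\mathrm{UF}_1^=$ holds.
   Context: Vocabularies are relational (relation symbols of positive finite arities, no constants or function symbols). A $k$-ary $\tau$-atom is an atomic formula (a relational atom $R(z_1,\dots,z_m)$ with $R\in\tau$, or an equality $z=z'$) having exactly $k$ distinct free variables. For a finite set $V$ of variables, a $V$-uniform set is a finite set of relational (non-equality) $\tau$-atoms $R(z_1,\dots,z_m)$ with $\{z_1,\dots,z_m\}=V$. The set $\mathrm{UF}_1^=(\tau)$ is the smallest set $\mathcal F$ such that: (1) every unary $\tau$-atom, and $\bot,\top$, are in $\mathcal F$; (2) every equality $x=y$ is in $\mathcal F$; (3) $\mathcal F$ is closed under $\neg$ and $\wedge$; (4) if $X=\{x_0,\dots,x_k\}$ is a finite set of variables, $U$ a finite set of formulas of $\mathcal F$ with free variables in $X$, $V\subseteq X$, $F$ a $V$-uniform set of $\tau$-atoms, and $\varphi$ a Boolean combination of formulas in $U\cup F$, then $\exists x_1\dots\exists x_k\,\varphi\in\mathcal F$ and $\exists x_0\dots\exists x_k\,\varphi\in\mathcal F$. $\mathrm{UF}_1^=$ is the union of $\mathrm{UF}_1^=(\tau)$ over all vocabularies; $\forall$ and other connectives are abbreviations. $\mathrm{FOC}^2$ is the two-variable fragment of first-order logic with equality extended by counting quantifiers $\exists^{\geq k}$ ($k$ a positive integer): formulas built using only two variable symbols. For fragments $\mathcal L,\mathcal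 L'$ of first-order logic, $\mathcal L\leq\mathcal L'$ means that every sentence of $\mathcal L$ is equivalent to some sentence of $\mathcal L'$. *)

From Stdlib Require Import List Arith PeanoNat.
Import ListNotations.

Set Implicit Arguments.

Record vocab := Vocab {
  sym : Type;
  arity : sym -> nat;
  arity_pos : forall R, 0 < arity R
}.

Definition var := nat.

Inductive form (t : vocab) : Type :=
| FBot : form t
| FTop : form t
| FAtom : sym t -> list var -> form t
| FEq : var -> var -> form t
| FNeg : form t -> form t
| FAnd : form t -> form t -> form t
| FEx : var -> form t -> form t
| FExGe : nat -> var -> form t -> form t.

Arguments FBot {t}.
Arguments FTop {t}.
Arguments FAtom {t}.
Arguments FEq {t}.
Arguments FNeg {t}.
Arguments FAnd {t}.
Arguments FEx {t}.
Arguments FExGe {t}.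

Fixpoint fv {t} (f : form t) : list var :=
  match f with
  | FBot | FTop => []
  | FAtom _ zs => zs
  | FEq x y => [x; y]
  | FNeg g => fv g
  | FAnd g h => fv g ++ fv h
  | FEx x g => remove Nat.eq_dec x (fv g)
  | FExGe _ x g => remove Nat.eq_dec x (fv g)
  end.

Fixpoint vars {t} (f : form t) : list var :=
  match f with
  | FBot | FTop => []
  | FAtom _ zs => zs
  | FEq x y => [x; y]
  | FNeg g => vars g
  | FAnd g h => vars g ++ vars h
  | FEx x g => x :: vars g
  | FExGe _ x g => x :: vars g
  end.

Fixpoint wf {t} (f : form t) : Prop :=
  match f with
  | FBot | FTop | FEq _ _ => True
  | FAtom R zs => length zs = arity t R
  | FNeg g => wf g
  | FAnd g h => wf g /\ wf h
  | FEx _ g => wf g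
  | FExGe _ _ g => wf g
  end.

Fixpoint cnt_pos {t} (f : form t) : Prop :=
  match f with
  | FBot | FTop | FEq _ _ | FAtom _ _ => True
  | FNeg g => cnt_pos g
  | FAnd g h => cnt_pos g /\ cnt_pos h
  | FEx _ g => cnt_pos g
  | FExGe k _ g => 0 < k /\ cnt_pos g
  end.

Definition sentence {t} (f : form t) : Prop := fv f = [].

(** Structures. Relations are interpreted on argument lists (only lists of
    length [arity R] are ever queried by well-formed formulas). *)
Record structure (t : vocab) := Structure {
  dom : Type;
  rel : sym t -> list dom -> Prop
}.

Definition upd {D : Type} (s : var -> D) (x : var) (d : D) : var -> D :=
  fun y => if Nat.eqb y x then d else s y.

Fixpoint sat {t} (M : structure t) (s : var -> dom M) (f : form t) : Prop :=
  match f with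
  | FBot => False
  | FTop => True
  | FAtom R zs => rel M R (map s zs)
  | FEq x y => s x = s y
  | FNeg g => ~ sat M s g
  | FAnd g h => sat M s g /\ sat M s h
  | FEx x g => exists d : dom M, sat M (upd s x d) g
  | FExGe k x g =>
      exists l : list (dom M),
        NoDup l /\ length l = k /\ forall d, In d l -> sat M (upd s x d) g
  end.

(** Logical equivalence (over all structures; assignments are quantified,
    so structures with empty domain play no role). *)
Definition equivalent {t} (f g : form t) : Prop :=
  forall (M : structure t) (s : var -> dom M), sat M s f <-> sat M s g.

Definition fragment := forall t : vocab, form t -> Prop.

Definition frag_le (L L' : fragment) : Prop :=
  forall (t : vocab) (f : form t), L t f -> sentence f ->
    exists g : form t, L' t g /\ sentence g /\ equivalent f g.

Definition FOC2 : fragment := fun t f =>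
  wf f /\ cnt_pos f /\
  exists x y : var, forall z, In z (vars f) -> z = x \/ z = y.

Fixpoint exs {t} (xs : list var) (f : form t) : form t :=
  match xs with
  | [] => f
  | x :: xs' => FEx x (exs xs' f)
  end.

Inductive boolcomb {t} (S : list (form t)) : form t -> Prop :=
| bc_leaf : forall f, In f S -> boolcomb S f
| bc_neg : forall f, boolcomb S f -> boolcomb S (FNeg f)
| bc_and : forall f g, boolcomb S f -> boolcomb S g -> boolcomb S (FAnd f g).

Definition unary_rel_atom {t} (f : form t) : Prop :=
  exists R zs z, f = FAtom R zs /\ length zs = arity t R /\
                 (forall w, In w zs <-> w = z).

Definition uniform_atom {t} (V : list var) (f : form t) : Prop :=
  exists R zs, f = FAtom R zs /\ length zs = arity t R /\
               (forall w, In w zs <-> In w V).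

Unset Implicit Arguments.
Inductive UF1 (t : vocab) : form t -> Prop :=
| UF1_unary : forall f, unary_rel_atom f -> UF1 t f
| UF1_bot : UF1 t FBot
| UF1_top : UF1 t FTop
| UF1_eq : forall x y, UF1 t (FEq x y)
| UF1_neg : forall f, UF1 t f -> UF1 t (FNeg f)
| UF1_and : forall f g, UF1 t f -> UF1 t g -> UF1 t (FAnd f g)
| UF1_ex : forall (x0 : var) (xs : list var) (U F : list (form t))
                  (V : list var) (phi : form t),
    NoDup (x0 :: xs) ->
    (forall u, In u U -> UF1 t u) ->
    (forall u, In u U -> incl (fv u) (x0 :: xs)) ->
    incl V (x0 :: xs) ->
    (forall a, In a F -> uniform_atom V a) ->
    boolcomb (U ++ F) phi ->
    UF1 t (exs xs phi)
| UF1_ex0 : forall (x0 : var) (xs : list var) (U F : list (form t))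
                   (V : list var) (phi : form t),
    NoDup (x0 :: xs) ->
    (forall u, In u U -> UF1 t u) ->
    (forall u, In u U -> incl (fv u) (x0 :: xs)) ->
    incl V (x0 :: xs) ->
    (forall a, In a F -> uniform_atom V a) ->
    boolcomb (U ++ F) phi ->
    UF1 t (FEx x0 (exs xs phi)).

Definition UF1_frag : fragment := UF1.
Set Implicit Arguments.

(* A sentence of FOC^2 only ever evaluates relational atoms on argument lists with at most
   two distinct values, so it cannot tell the ternary relation "three distinct arguments"
   from the empty relation, while the UF_1^= sentence  exists x y z. R(x, y, z)  can.

   Conversely, UF_1^= cannot tell a disjoint union of infinitely many edges from a disjoint
   union of infinitely many triangles, which the FOC^2 sentence "every vertex has at least
   two neighbours" separates.  By induction on UF_1^= formulas, their truth depends only on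
   the equality type of the assignment to the free variables: the atoms in a uniform block
   of quantifiers mention at most two variables, so its witnesses can be transported along
   an injection of vertices that fixes the single free variable of the block and preserves
   the one adjacency those atoms can see, and such injections exist in both structures. *)

From Stdlib Require Import List Arith Lia Classical FunctionalExtensionality.
Import ListNotations.

Lemma not_frag_le_of_separating (L L' : fragment) (t : vocab) (f : form t)
    (M1 M2 : structure t) (s1 : var -> dom M1) (s2 : var -> dom M2) :
  L t f -> sentence f -> sat M1 s1 f -> ~ sat M2 s2 f ->
  (forall g, L' t g -> sentence g -> (sat M1 s1 g <-> sat M2 s2 g)) ->
  ~ frag_le L L'.
Proof.
  intros Lf sent_f sat1 unsat2 agree le.
  destruct (le t f Lf sent_f) as (g & L'g & sent_g & equiv_fg).
  apply unsat2, equiv_fg, agree, equiv_fg; assumption.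
Qed.

Lemma sat_exs (t : vocab) (M : structure t) (xs : list var) (phi : form t) (s : var -> dom M) :
  sat M s (exs xs phi) <->
  exists s', (forall y, ~ In y xs -> s' y = s y) /\ sat M s' phi.
Proof.
  revert s; induction xs as [|x xs IH]; intros s; simpl.
  - split; [intros H; exists s; auto | intros (s' & agree & H)].
    replace s with s'; auto. apply functional_extensionality; intros y; apply agree; auto.
  - split.
    + intros (d & (s' & agree & H)%IH). exists s'; split; auto.
      intros y y_out. rewrite agree by tauto. unfold upd.
      destruct (Nat.eqb_spec y x); [subst; tauto | reflexivity].
    + intros (s' & agree & H). exists (s' x). apply IH. exists s'; split; auto.
      intros y y_out. unfold upd. destruct (Nat.eqb_spec y x); [now subst |].
      apply agree. simpl; intros [-> | ?]; tauto.
Qed.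

Lemma boolcomb_sat_iff (t : vocab) (M1 M2 : structure t) (s1 : var -> dom M1)
    (s2 : var -> dom M2) (S : list (form t)) (phi : form t) :
  boolcomb S phi -> (forall f, In f S -> (sat M1 s1 f <-> sat M2 s2 f)) ->
  (sat M1 s1 phi <-> sat M2 s2 phi).
Proof. intros bc S_agree; induction bc; simpl; auto; tauto. Qed.

Definition eq_pattern (L : list var) (s s' : var -> nat) : Prop :=
  forall x y, In x L -> In y L -> (s x = s y <-> s' x = s' y).

Lemma eq_pattern_incl L1 L2 s s' : incl L1 L2 -> eq_pattern L2 s s' -> eq_pattern L1 s s'.
Proof. intros sub pat x y Hx Hy; apply pat; auto. Qed.

Lemma eq_pattern_sym L s s' : eq_pattern L s s' -> eq_pattern L s' s.
Proof. intros pat x y Hx Hy; symmetry; apply pat; auto. Qed.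

Lemma sat_two_vars_agree (t : vocab) (D : Type) (r1 r2 : sym t -> list D -> Prop)
    (x y : var) :
  (forall R (d e : D) l, (forall a, In a l -> a = d \/ a = e) -> (r1 R l <-> r2 R l)) ->
  forall f : form t, (forall z, In z (vars f) -> z = x \/ z = y) ->
  forall s, sat (Structure t r1) s f <-> sat (Structure t r2) s f.
Proof.
  intros agree f; induction f as [| |R zs|z z'|f IHf|f IHf g IHg|z f IHf|k z f IHf];
    intros two_vars s; simpl in *; try tauto.
  - apply (agree R (s x) (s y)). intros a [z [<- Hz]]%in_map_iff.
    destruct (two_vars z Hz) as [-> | ->]; auto.
  - rewrite IHf; tauto.
  - rewrite IHf, IHg; [tauto| |]; intros z Hz; apply two_vars, in_or_app; auto.
  - split; intros [d Hd]; exists d; apply IHf; auto.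
  - split; intros (l & nodup & len & Hl); exists l; repeat split; auto;
      intros d Hd; apply IHf; auto.
Qed.

Definition voc3 : vocab :=
  {| sym := unit; arity := fun _ => 3; arity_pos := fun _ => Nat.lt_0_succ 2 |}.

Definition three_distinct (l : list nat) : Prop :=
  exists a b c, In a l /\ In b l /\ In c l /\ a <> b /\ b <> c /\ a <> c.

Definition distinct_triples : structure voc3 := Structure voc3 (fun _ => three_distinct).

Definition no_triples : structure voc3 := Structure voc3 (fun _ (_ : list nat) => False).

Definition some_distinct_triple : form voc3 :=
  FEx 0 (exs [1; 2] (FAtom (tt : sym voc3) [0; 1; 2])).

Lemma some_distinct_triple_UF1 : UF1 voc3 some_distinct_triple.
Proof.
  apply (UF1_ex0 voc3 0 [1; 2] [] [FAtom (tt : sym voc3) [0; 1; 2]] [0; 1; 2]).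
  - repeat constructor; simpl; lia.
  - contradiction.
  - contradiction.
  - apply incl_refl.
  - intros a [<- | []]. exists tt, [0; 1; 2]. repeat split; auto.
  - apply bc_leaf; simpl; auto.
Qed.

Lemma not_UF1_le_FOC2 : ~ frag_le UF1_frag FOC2.
Proof.
  apply (not_frag_le_of_separating UF1_frag FOC2 voc3 some_distinct_triple
           distinct_triples no_triples (fun _ => 0) (fun _ => 0)).
  - exact some_distinct_triple_UF1.
  - reflexivity.
  - exists 0, 1, 2. exists 0, 1, 2. cbn. intuition lia.
  - intros (a & b & c & []).
  - intros g (_ & _ & x & y & two_vars) _.
    apply (sat_two_vars_agree voc3 nat _ _ x y); [|exact two_vars].
    intros R d e l dual; simpl; split; [|contradiction].
    intros (a & b & c & Ha & Hb & Hc & ab & bc & ac).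
    destruct (dual a Ha), (dual b Hb), (dual c Hc); congruence.
Qed.

Definition voc2 : vocab :=
  {| sym := unit; arity := fun _ => 2; arity_pos := fun _ => Nat.lt_0_succ 1 |}.

Definition adj (c m n : nat) : Prop := m <> n /\ m / c = n / c.

(* The disjoint union of countably many c-cliques: vertex n lies in clique n / c. *)
Definition cliques (c : nat) : structure voc2 :=
  Structure voc2 (fun _ l => match l with [m; n] => adj c m n | _ => False end).

Lemma adj_sym c m n : adj c m n -> adj c n m.
Proof. intros [ne same]; split; congruence. Qed.

Lemma adj_irrefl c m : ~ adj c m m.
Proof. intros [ne _]; exact (ne eq_refl). Qed.

Lemma div_mul_add_small c k i : i < c -> (c * k + i) / c = k.
Proof. intros i_lt. symmetry; apply (Nat.div_unique _ _ _ i); lia. Qed.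

Definition neighbour (c b : nat) : nat := if b mod c =? 0 then b + 1 else b - 1.

Lemma adj_neighbour c b : 2 <= c -> adj c b (neighbour c b).
Proof.
  intros two_le_c.
  pose proof (Nat.div_mod_eq b c) as b_eq.
  pose proof (Nat.mod_upper_bound b c ltac:(lia)) as r_lt.
  unfold neighbour; destruct (Nat.eqb_spec (b mod c) 0) as [r0 | r_pos]; split; try lia.
  - replace (b + 1) with (c * (b / c) + 1) by lia. rewrite div_mul_add_small; lia.
  - replace (b - 1) with (c * (b / c) + (b mod c - 1)) by lia. rewrite div_mul_add_small; lia.
Qed.

Lemma cliques_realize_pair c (e : Prop) (a0 ap aq b0 : nat) :
  2 <= c -> (e -> ap <> aq) ->
  exists bp bq, (a0 = ap <-> b0 = bp) /\ (a0 = aq <-> b0 = bq) /\ (ap = aq <-> bp = bq) /\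
                (e <-> adj c bp bq).
Proof.
  intros two_le_c e_distinct.
  set (nb := neighbour c b0).
  set (F := c * (b0 / c + 1)).
  assert (adj_nb : adj c b0 nb) by apply (adj_neighbour c b0 two_le_c).
  assert (adj_nb' : adj c nb b0) by now apply adj_sym.
  assert (nb_ne : b0 <> nb) by apply adj_nb.
  assert (block_F : F / c = b0 / c + 1) by (rewrite <- (Nat.add_0_r F); apply div_mul_add_small; lia).
  assert (block_F1 : (F + 1) / c = b0 / c + 1) by (apply div_mul_add_small; lia).
  assert (block_Fc : (F + c) / c = b0 / c + 2)
    by (replace (F + c) with (c * (b0 / c + 2) + 0) by lia; apply div_mul_add_small; lia).
  assert (F_ne : b0 <> F) by (intros E; rewrite <- E in block_F; lia).
  assert (F1_ne : b0 <> F + 1) by (intros E; rewrite <- E in block_F1; lia).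
  assert (Fc_ne : b0 <> F + c) by (intros E; rewrite <- E in block_Fc; lia).
  assert (adj_F : adj c F (F + 1)) by (split; lia).
  assert (nadj_b0F : ~ adj c b0 F) by (intros [_ E]; lia).
  assert (nadj_Fb0 : ~ adj c F b0) by (intros [_ E]; lia).
  assert (nadj_FFc : ~ adj c F (F + c)) by (intros [_ E]; lia).
  pose proof (adj_irrefl c b0) as nadj_b0. pose proof (adj_irrefl c F) as nadj_F.
  clearbody nb F.
  (* Each equality type of (a0, ap, aq) compatible with e is realized by one of these pairs. *)
  destruct (classic e) as [He | He]; [specialize (e_distinct He) |];
  destruct (Nat.eq_dec a0 ap), (Nat.eq_dec a0 aq), (Nat.eq_dec ap aq);
  let realize bp bq :=
    exists bp, bq; split; [lia | split; [lia | split; [lia | tauto]]] in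
  first [ realize b0 nb | realize nb b0 | realize F (F + 1) | realize b0 b0
        | realize F F | realize b0 F | realize F b0 | realize F (F + c) ].
Qed.

Lemma triple_extends_to_injection (a0 ap aq b0 bp bq : nat) :
  (a0 = ap <-> b0 = bp) -> (a0 = aq <-> b0 = bq) -> (ap = aq <-> bp = bq) ->
  exists g : nat -> nat,
    (forall n m, g n = g m -> n = m) /\ g a0 = b0 /\ g ap = bp /\ g aq = bq.
Proof.
  intros same_0p same_0q same_pq.
  set (N := S (b0 + bp + bq)).
  set (g n := if n =? a0 then b0 else if n =? ap then bp else if n =? aq then bq else N + n).
  assert (g0 : g a0 = b0) by (unfold g; now rewrite Nat.eqb_refl).
  assert (gp : g ap = bp).
  { unfold g; destruct (Nat.eqb_spec ap a0);
      [apply same_0p; congruence | now rewrite Nat.eqb_refl]. }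
  assert (gq : g aq = bq).
  { unfold g; destruct (Nat.eqb_spec aq a0); [apply same_0q; congruence |].
    destruct (Nat.eqb_spec aq ap); [apply same_pq; congruence | now rewrite Nat.eqb_refl]. }
  assert (g_out : forall n, ~ In n [a0; ap; aq] -> g n = N + n).
  { intros n n_out; unfold g; simpl in n_out.
    repeat match goal with |- context [n =? ?y] =>
      destruct (Nat.eqb_spec n y) as [-> | _]; [exfalso; auto |] end.
    reflexivity. }
  assert (g_in : forall n, In n [a0; ap; aq] -> g n < N).
  { intros n [<- | [<- | [<- | []]]]; rewrite ?g0, ?gp, ?gq; unfold N; lia. }
  exists g; repeat split; auto.
  intros n m gnm.
  destruct (in_dec Nat.eq_dec n [a0; ap; aq]) as [n_in | n_out],
    (in_dec Nat.eq_dec m [a0; ap; aq]) as [m_in | m_out].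
  - destruct n_in as [<- | [<- | [<- | []]]], m_in as [<- | [<- | [<- | []]]];
      rewrite ?g0, ?gp, ?gq in gnm;
      first [ reflexivity | apply same_0p | apply same_0q | apply same_pq
            | symmetry; first [apply same_0p | apply same_0q | apply same_pq] ];
      congruence.
  - pose proof (g_in n n_in); rewrite (g_out m m_out) in gnm; lia.
  - pose proof (g_in m m_in); rewrite (g_out n n_out) in gnm; lia.
  - rewrite (g_out n n_out), (g_out m m_out) in gnm; lia.
Qed.

Lemma cliques_pair_transfer c1 c2 (a0 b0 ap aq : nat) :
  2 <= c2 ->
  exists g : nat -> nat, (forall n m, g n = g m -> n = m) /\ g a0 = b0 /\
                         (adj c1 ap aq <-> adj c2 (g ap) (g aq)).
Proof.
  intros two_le_c2.
  destruct (cliques_realize_pair c2 (adj c1 ap aq) a0 ap aq b0 two_le_c2)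
    as (bp & bq & same_0p & same_0q & same_pq & same_adj); [now intros [ne _] |].
  destruct (triple_extends_to_injection a0 ap aq b0 bp bq same_0p same_0q same_pq)
    as (g & g_inj & g0 & gp & gq).
  exists g; rewrite gp, gq; auto.
Qed.

Lemma uniform_atoms_two_vars (V : list var) (F : list (form voc2)) :
  (forall a, In a F -> uniform_atom V a) ->
  exists p q, forall a, In a F ->
    exists R u v, a = FAtom R [u; v] /\ In u V /\ In v V /\ In u [p; q] /\ In v [p; q].
Proof.
  intros uniform. destruct F as [|a0 F]; [exists 0, 0; contradiction |].
  destruct (uniform a0 (or_introl eq_refl)) as (R0 & [|p [|q [|]]] & _ & len0 & vars0);
    try discriminate.
  exists p, q. intros a Ha.
  destruct (uniform a Ha) as (R & [|u [|v [|]]] & -> & len & vars_a); try discriminate.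
  assert (uV : In u V) by (apply vars_a; simpl; auto).
  assert (vV : In v V) by (apply vars_a; simpl; auto).
  exists R, u, v. repeat split; auto; apply vars0; auto.
Qed.

Lemma cliques_atom_transfer c1 c2 (R : sym voc2) (u v p q : var) (t t' : var -> nat)
    (g : nat -> nat) :
  In u [p; q] -> In v [p; q] -> t' u = g (t u) -> t' v = g (t v) ->
  (adj c1 (t p) (t q) <-> adj c2 (g (t p)) (g (t q))) ->
  (sat (cliques c1) t (FAtom R [u; v]) <-> sat (cliques c2) t' (FAtom R [u; v])).
Proof.
  intros u_pq v_pq tu tv g_adj; simpl; rewrite tu, tv.
  destruct u_pq as [<- | [<- | []]], v_pq as [<- | [<- | []]];
    try (split; intros H; contradict H; apply adj_irrefl); auto.
  split; intros H; apply adj_sym, g_adj, adj_sym, H.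
Qed.

Lemma sat_exs_cliques_transfer c1 c2 (Bl Q : list var) (U F : list (form voc2)) (V : list var)
    (phi : form voc2) (s s' : var -> nat) (a0 b0 : nat) :
  2 <= c2 ->
  (forall u, In u U -> forall t t', eq_pattern (fv u) t t' ->
     (sat (cliques c1) t u <-> sat (cliques c2) t' u)) ->
  (forall u, In u U -> incl (fv u) Bl) -> incl V Bl ->
  (forall a, In a F -> uniform_atom V a) -> boolcomb (U ++ F) phi ->
  (forall y, In y Bl -> ~ In y Q -> s y = a0 /\ s' y = b0) ->
  sat (cliques c1) s (exs Q phi) -> sat (cliques c2) s' (exs Q phi).
Proof.
  intros two_le_c2 U_inv U_Bl V_Bl F_uniform phi_bc anchored (t & t_s & sat_t)%sat_exs.
  destruct (uniform_atoms_two_vars V F F_uniform) as (p & q & F_shape).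
  destruct (cliques_pair_transfer c1 c2 a0 b0 (t p) (t q) two_le_c2)
    as (g & g_inj & g_a0 & g_adj).
  set (t' y := if in_dec Nat.eq_dec y Q then g (t y) else s' y).
  assert (t'_Bl : forall y, In y Bl -> t' y = g (t y)).
  { intros y y_Bl. unfold t'. destruct (in_dec Nat.eq_dec y Q) as [|y_out]; [reflexivity |].
    destruct (anchored y y_Bl y_out) as [sy s'y]. now rewrite t_s, sy, s'y. }
  apply sat_exs. exists t'. split.
  { intros y y_out. unfold t'. now destruct (in_dec Nat.eq_dec y Q). }
  apply (boolcomb_sat_iff voc2 (cliques c1) (cliques c2) t t' (U ++ F) phi phi_bc);
    [| exact sat_t].
  intros f [f_U | f_F]%in_app_or.
  - apply U_inv; [exact f_U |]. intros x y Hx Hy.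
    rewrite !t'_Bl by (apply (U_Bl f); auto).
    split; [congruence | apply g_inj].
  - destruct (F_shape f f_F) as (R & u & v & -> & uV & vV & u_pq & v_pq).
    apply (cliques_atom_transfer c1 c2 R u v p q t t' g); auto.
Qed.

Lemma UF1_cliques_invariant c1 c2 :
  2 <= c1 -> 2 <= c2 ->
  forall f, UF1 voc2 f -> forall s s', eq_pattern (fv f) s s' ->
  (sat (cliques c1) s f <-> sat (cliques c2) s' f).
Proof.
  intros two_le_c1 two_le_c2.
  fix IH 2. intros f UF1_f s s' pat.
  destruct UF1_f as [f unary| | |x y|f UF1_f|f g UF1_f UF1_g
                    |x0 xs U F V phi _ U_UF1 U_fv V_incl F_uniform phi_bc
                    |x0 xs U F V phi _ U_UF1 U_fv V_incl F_uniform phi_bc].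
  - destruct unary as (R & [|u [|v [|]]] & z & -> & len & only_z); try discriminate.
    assert (u = z) as -> by (apply only_z; simpl; auto).
    assert (v = z) as -> by (apply only_z; simpl; auto).
    split; intros H; contradict H; apply adj_irrefl.
  - reflexivity.
  - reflexivity.
  - apply pat; simpl; auto.
  - simpl; rewrite (IH f UF1_f s s' pat); reflexivity.
  - simpl; rewrite (IH f UF1_f s s'), (IH g UF1_g s s');
      [ reflexivity
      | apply (eq_pattern_incl _ _ _ _ (incl_appr _ (incl_refl _)) pat)
      | apply (eq_pattern_incl _ _ _ _ (incl_appl _ (incl_refl _)) pat) ].
  - split; intros sat_phi.
    + refine (sat_exs_cliques_transfer c1 c2 (x0 :: xs) xs U F V phi s s' (s x0) (s' x0)
                two_le_c2 _ U_fv V_incl F_uniform phi_bc _ sat_phi).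
      * intros u u_U; apply IH, U_UF1, u_U.
      * intros y [<- | y_xs] y_out; tauto.
    + refine (sat_exs_cliques_transfer c2 c1 (x0 :: xs) xs U F V phi s' s (s' x0) (s x0)
                two_le_c1 _ U_fv V_incl F_uniform phi_bc _ sat_phi).
      * intros u u_U t t' pat'; symmetry; apply IH; [apply U_UF1, u_U | apply eq_pattern_sym, pat'].
      * intros y [<- | y_xs] y_out; tauto.
  - change (FEx x0 (exs xs phi)) with (exs (x0 :: xs) phi).
    split; intros sat_phi.
    + refine (sat_exs_cliques_transfer c1 c2 (x0 :: xs) (x0 :: xs) U F V phi s s' 0 0
                two_le_c2 _ U_fv V_incl F_uniform phi_bc _ sat_phi); [|tauto].
      intros u u_U; apply IH, U_UF1, u_U.
    + refine (sat_exs_cliques_transfer c2 c1 (x0 :: xs) (x0 :: xs) U F V phi s' s 0 0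
                two_le_c1 _ U_fv V_incl F_uniform phi_bc _ sat_phi); [|tauto].
      intros u u_U t t' pat'; symmetry; apply IH; [apply U_UF1, u_U | apply eq_pattern_sym, pat'].
Qed.

Definition every_vertex_two_neighbours : form voc2 :=
  FNeg (FEx 0 (FNeg (FExGe 2 1 (FAtom (tt : sym voc2) [0; 1])))).

Lemma every_vertex_two_neighbours_FOC2 : @FOC2 voc2 every_vertex_two_neighbours.
Proof.
  split; [exact eq_refl |]. split; [simpl; auto |].
  exists 0, 1. simpl; intuition.
Qed.

Lemma sat_every_vertex_two_neighbours c (s : var -> nat) :
  sat (cliques c) s every_vertex_two_neighbours <->
  forall x, exists y z, y <> z /\ adj c x y /\ adj c x z.
Proof.
  simpl. split.
  - intros no_bad x. apply NNPP. intros no_pair. apply no_bad. exists x.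
    intros ([|y [|z [|]]] & nodup & len & adj_all); try discriminate.
    apply no_pair. exists y, z. cbn in adj_all. repeat split; try apply adj_all; auto.
    intros ->. inversion nodup as [|? ? z_notin]. apply z_notin; simpl; auto.
  - intros two_nb [x bad]. apply bad.
    destruct (two_nb x) as (y & z & yz & xy & xz).
    exists [y; z]. split; [| split; [reflexivity |]].
    + constructor; [simpl; intuition | constructor; [auto | constructor]].
    + intros w [<- | [<- | []]]; cbn; assumption.
Qed.

Lemma cliques_two_neighbours c x :
  3 <= c -> exists y z, y <> z /\ adj c x y /\ adj c x z.
Proof.
  intros three_le_c.
  pose proof (Nat.div_mod_eq x c) as x_eq.
  pose proof (Nat.mod_upper_bound x c ltac:(lia)) as r_lt.
  assert (block : forall i, i < c -> (c * (x / c) + i) / c = x / c) by (intros; apply div_mul_add_small; lia).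
  assert (adj_block : forall i, i < c -> i <> x mod c -> adj c x (c * (x / c) + i))
    by (intros i i_lt i_ne; split; [lia | now rewrite block]).
  destruct (Nat.eq_dec (x mod c) 0) as [r0 | r_pos].
  - exists (c * (x / c) + 1), (c * (x / c) + 2). repeat split; try apply adj_block; lia.
  - exists (c * (x / c) + 0), (c * (x / c) + (if x mod c =? 1 then 2 else 1)).
    destruct (Nat.eqb_spec (x mod c) 1); repeat split; try apply adj_block; lia.
Qed.

Lemma cliques2_vertex0_one_neighbour y z : adj 2 0 y -> adj 2 0 z -> y = z.
Proof.
  intros [y_ne y_block] [z_ne z_block].
  apply eq_sym, Nat.div_small_iff in y_block, z_block; lia.
Qed.

Lemma not_FOC2_le_UF1 : ~ frag_le FOC2 UF1_frag.
Proof.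
  apply (not_frag_le_of_separating FOC2 UF1_frag voc2 every_vertex_two_neighbours
           (cliques 3) (cliques 2) (fun _ => 0) (fun _ => 0)).
  - exact every_vertex_two_neighbours_FOC2.
  - reflexivity.
  - apply sat_every_vertex_two_neighbours. intros x; apply cliques_two_neighbours; lia.
  - rewrite sat_every_vertex_two_neighbours. intros two_nb.
    destruct (two_nb 0) as (y & z & yz & y_adj & z_adj).
    exact (yz (cliques2_vertex0_one_neighbour y z y_adj z_adj)).
  - intros g UF1_g sentence_g.
    apply (UF1_cliques_invariant 3 2); [lia | lia | exact UF1_g |].
    unfold sentence in sentence_g. rewrite sentence_g. intros x y [].
Qed.

Theorem mainTheorem4 : ~ frag_le UF1_frag FOC2 /\ ~ frag_le FOC2 UF1_frag.
Proof. split; [exact not_UF1_le_FOC2 | exact not_FOC2_le_UF1]. Qed.
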